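(* Let $G$ be a graph with $m\ge 1$ edges and let $a_1<a_2<\cdots<a_m$ be positive integers. Then there exist an orientation $D$ of $G$ and a bijection $\tau:A(D)\to\{a_1,\dots,a_m\}$ such that $s_{(D,\tau)}(v)\ge -a_m$ for every vertex $v\in V(G)$.
   Context: All graphs are finite and simple. An orientation $D$ of $G$ assigns to each edge one direction; $A(D)$ is its arc set. For an injective map $\tau$ from $A(D)$ to a set of positive integers and a vertex $u$, $s_{(D,\tau)}(u)$ is the sum of $\tau$-labels of all arcs entering $u$ minus the sum of $\tau$-labels of all arcs leaving $u$, with $s_{(D,\tau)}(u)=0$ if $u$ is isolated. *)

From HB Require Import structures.
From mathcomp Require Import all_boot all_order all_algebra.
Set Implicit Arguments. Unset Strict Implicit. Unset Printing Implicit Defensive.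
Import Order.TTheory GRing.Theory Num.Theory.

Definition simple_graph (T : finType) (e : rel T) : Prop :=
  symmetric e /\ irreflexive e.

Definition edges (T : finType) (e : rel T) : {set {set T}} :=
  [set [set p.1; p.2] | p in [set q : T * T | e q.1 q.2]].

Definition orientation (T : finType) (e : rel T) (D : rel T) : Prop :=
  (forall x y, D x y -> e x y) /\ (forall x y, e x y -> D x y = ~~ D y x).

Definition arcs (T : finType) (D : rel T) : {set T * T} :=
  [set p : T * T | D p.1 p.2].

Definition s_lab (T : finType) (D : rel T) (tau : T * T -> nat) (u : T) : int :=
  ((\sum_(w | D w u) (tau (w, u))%:Z) - (\sum_(w | D u w) (tau (u, w))%:Z))%R.

From HB Require Import structures.
From mathcomp Require Import all_boot all_order all_algebra.
Import Order.TTheory GRing.Theory Num.Theory.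
From mathcomp Require Import zify.
Set Implicit Arguments. Unset Strict Implicit. Unset Printing Implicit Defensive.

(* We prove a rooted strengthening by induction on the number of
   edges: for every vertex r and every strictly increasing label sequence
   a = a_1 < ... < a_m with m = |E(G)|, there is an orientation D and a
   bijective labelling tau : A(D) -> {a_1,...,a_m} with s(w) >= -a_m for all
   w and moreover s(r) >= 0.
   If r has a neighbour u, delete the edge ur, solve the smaller instance
   with labels a_1,...,a_(m-1) rooted at u, and add the arc u -> r with the
   largest label a_m: then s(u) >= 0 drops to at least -a_m, s(r) rises by
   a_m >= a_(m-1), and no other vertex changes.  If r is isolated, s(r) = 0
   and any edge can play the role of ur. *)

Section EdgeDeletion.
Variable T : finType.

Definition rem_edge (e : rel T) (u v : T) : rel T :=
  fun x y => e x y && ([set x; y] != [set u; v]).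

Lemma edge_in_edges (e : rel T) u v : e u v -> [set u; v] \in edges e.
Proof. by move=> euv; apply/imsetP; exists (u, v); rewrite ?inE. Qed.

Lemma edges_rem_edge (e : rel T) u v :
  edges (rem_edge e u v) = edges e :\ [set u; v].
Proof.
apply/setP => S; rewrite in_setD1; apply/imsetP/andP.
- case=> p; rewrite inE /rem_edge => /andP [ep neq] ->; split => //.
  by apply/imsetP; exists p; rewrite ?inE.
- case=> neq /imsetP [p]; rewrite inE => ep Sdef.
  by exists p => //; rewrite inE /rem_edge ep -Sdef neq.
Qed.

Lemma card_edges_rem_edge (e : rel T) u v :
  e u v -> #|edges e| = #|edges (rem_edge e u v)|.+1.
Proof.
by move=> euv; rewrite edges_rem_edge (cardsD1 [set u; v]) edge_in_edges.
Qed.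

Lemma simple_graph_rem_edge (e : rel T) u v :
  simple_graph e -> simple_graph (rem_edge e u v).
Proof.
move=> [esym eirr]; split => [x y|x]; last by rewrite /rem_edge eirr.
by rewrite /rem_edge esym setUC.
Qed.

Lemma set2_eq (y z u v : T) :
  [set y; z] = [set u; v] -> (y, z) = (u, v) \/ (y, z) = (v, u).
Proof.
move=> E.
have /set2P yuv : y \in [set u; v] by rewrite -E set21.
have /set2P zuv : z \in [set u; v] by rewrite -E set22.
have /set2P uyz : u \in [set y; z] by rewrite E set21.
have /set2P vyz : v \in [set y; z] by rewrite E set22.
by case: yuv zuv uyz vyz => {E} -> [] -> [] Eu [] Ev; subst; auto.
Qed.

End EdgeDeletion.

Section ArcInsertion.
Variable T : finType.
Implicit Types (D : rel T) (tau : T * T -> nat) (a : seq nat).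

Definition add_arc D (u v : T) : rel T := fun y z => D y z || ((y, z) == (u, v)).

Definition add_label tau (u v : T) (x : nat) : T * T -> nat :=
  fun p => if p == (u, v) then x else tau p.

Definition labelling D tau a : Prop :=
  [/\ {in arcs D &, injective tau},
      (forall p, p \in arcs D -> tau p \in a) &
      (forall x, x \in a -> exists2 p, p \in arcs D & tau p = x)].

Lemma labelling_eq_mem D tau a b : a =i b -> labelling D tau a -> labelling D tau b.
Proof.
move=> ab [inj into onto]; split=> // [p pD|x]; first by rewrite -ab into.
by rewrite -ab; apply: onto.
Qed.

Lemma rem_edge_no_arc (e : rel T) D u v :
  orientation (rem_edge e u v) D -> ~~ D u v.
Proof. by case=> De _; apply/negP => /De; rewrite /rem_edge eqxx andbF. Qed.

Lemma orientation_add_arc (e : rel T) D u v :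
  simple_graph e -> e u v -> orientation (rem_edge e u v) D ->
  orientation e (add_arc D u v).
Proof.
move=> [esym eirr] euv oD; have [De Dor] := oD.
have nuv : u != v by apply/eqP => E; move: euv; rewrite E eirr.
have Dvu : ~~ D v u by apply/negP => /De; rewrite /rem_edge setUC eqxx andbF.
have Dvu_uv : ((v, u) == (u, v)) = false by rewrite xpair_eqE eq_sym (negbTE nuv).
split=> [y z|y z eyz].
  by rewrite /add_arc => /orP [/De /andP [] //| /eqP [-> ->]].
rewrite /add_arc; case: (eqVneq [set y; z] [set u; v]) => [/set2_eq|Hs].
  by case=> [] [-> ->]; rewrite eqxx Dvu_uv (negbTE Dvu) orbT.
have neq_uv p q : [set p; q] != [set u; v] -> ((p, q) == (u, v)) = false.
  by move=> H; apply/negbTE/eqP => [[Ep Eq]]; rewrite Ep Eq eqxx in H.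
rewrite !neq_uv // 1?setUC // !orbF; apply: Dor.
by rewrite /rem_edge eyz Hs.
Qed.

Lemma labelling_add_arc D tau a u v x :
  ~~ D u v -> x \notin a -> labelling D tau a ->
  labelling (add_arc D u v) (add_label tau u v x) (x :: a).
Proof.
move=> Duv xa [inj into onto].
have arcsE p : (p \in arcs (add_arc D u v)) = (p \in arcs D) || (p == (u, v)).
  by case: p => p1 p2; rewrite !inE.
have old p : p \in arcs D -> add_label tau u v x p = tau p.
  move=> pD; rewrite /add_label; case: eqP => // E.
  by rewrite E inE (negbTE Duv) in pD.
have new : add_label tau u v x (u, v) = x by rewrite /add_label eqxx.
split.
- move=> p q; rewrite !arcsE => /orP [pD|/eqP ->] /orP [qD|/eqP ->] //.
  + by rewrite !old //; apply: inj.
  + by rewrite (old p) // new => E; move: (into p pD); rewrite E (negbTE xa).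
  + by rewrite (old q) // new => E; move: (into q qD); rewrite -E (negbTE xa).
- move=> p; rewrite arcsE in_cons => /orP [pD|/eqP ->].
    by rewrite old // into ?orbT.
  by rewrite new eqxx.
- move=> y; rewrite in_cons => /orP [/eqP ->|ya].
    by exists (u, v); rewrite ?arcsE ?eqxx ?orbT.
  by have [p pD <-] := onto y ya; exists p; rewrite ?arcsE ?pD ?old.
Qed.

Lemma big_pred_or1 (P : pred T) (b : bool) (z : T) (F : T -> int) :
  (b -> ~~ P z) ->
  (\sum_(y | P y || b && (y == z)) F y = \sum_(y | P y) F y + (if b then F z else 0))%R.
Proof.
case: b => [/(_ isT) Pz|_]; last by rewrite addr0; apply: eq_bigl => y; rewrite orbF.
rewrite (bigD1 z) ?eqxx ?orbT //= addrC; congr (_ + _)%R; apply: eq_bigl => y.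
by case: eqVneq => [->|_]; rewrite ?(negbTE Pz) ?andbF ?orbF ?andbT.
Qed.

Lemma s_lab_add_arc D tau u v x w :
  ~~ D u v ->
  s_lab (add_arc D u v) (add_label tau u v x) w =
  (s_lab D tau w + (if w == v then x%:Z else 0) - (if w == u then x%:Z else 0))%R.
Proof.
move=> Duv.
have old p : D p.1 p.2 -> add_label tau u v x p = tau p.
  case: p => p1 p2 /= Dp; rewrite /add_label; case: eqP => // -[E1 E2].
  by rewrite E1 E2 (negbTE Duv) in Dp.
have in_pred y : add_arc D u v y w = D y w || (w == v) && (y == u).
  by rewrite /add_arc xpair_eqE andbC.
have out_pred y : add_arc D u v w y = D w y || (w == u) && (y == v).
  by rewrite /add_arc xpair_eqE.
rewrite /s_lab (eq_bigl _ _ in_pred) (eq_bigl _ _ out_pred).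
rewrite !big_pred_or1; first last.
- by move/eqP->.
- by move/eqP->.
rewrite (eq_bigr (fun y => (tau (y, w))%:Z%R)) => [|y Dy]; last by rewrite old.
rewrite [X in (_ - (X + _))%R](eq_bigr (fun y => (tau (w, y))%:Z%R)) => [|y Dy];
  last by rewrite old.
have new_in : (if w == v then (add_label tau u v x (u, w))%:Z else 0 :> int)%R
    = (if w == v then x%:Z else 0)%R.
  by case: eqP => // ->; rewrite /add_label eqxx.
have new_out : (if w == u then (add_label tau u v x (w, v))%:Z else 0 :> int)%R
    = (if w == u then x%:Z else 0)%R.
  by case: eqP => // ->; rewrite /add_label eqxx.
by rewrite new_in new_out opprD addrA [in LHS](addrAC _ (if _ then _ else _)).
Qed.

End ArcInsertion.

Lemma s_lab_isolated (T : finType) (e D : rel T) tau (r : T) :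
  symmetric e -> orientation e D -> (forall w, ~~ e w r) -> s_lab D tau r = 0%R.
Proof.
move=> esym [De _] nr.
have Din w : D w r = false by apply/negP => /De; rewrite (negbTE (nr w)).
have Dout w : D r w = false by apply/negP => /De; rewrite esym (negbTE (nr w)).
by rewrite /s_lab !big_pred0 ?subrr.
Qed.

Lemma edgeless_labelling (T : finType) (e : rel T) :
  edges e = set0 ->
  [/\ orientation e (fun _ _ => false),
      labelling (fun _ _ : T => false) (fun _ => 0%N) [::] &
      forall w, s_lab (fun _ _ : T => false) (fun _ => 0%N) w = 0%R].
Proof.
move=> E0; have noe y z : e y z = false.
  by apply/negP => /edge_in_edges; rewrite E0 inE.
split=> [|| w]; last by rewrite /s_lab !big_pred0 ?subrr.
  by split=> // y z; rewrite noe.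
by split=> // p; rewrite inE.
Qed.

Lemma extend_by_edge (T : finType) (e D : rel T) tau (a : seq nat) u v x :
  simple_graph e -> e u v -> x \notin a ->
  orientation (rem_edge e u v) D -> labelling D tau a ->
  (forall w, (- x%:Z <= s_lab D tau w)%R) -> (0 <= s_lab D tau u)%R ->
  [/\ orientation e (add_arc D u v),
      labelling (add_arc D u v) (add_label tau u v x) (x :: a),
      (forall w, (- x%:Z <= s_lab (add_arc D u v) (add_label tau u v x) w)%R) &
      (0 <= s_lab (add_arc D u v) (add_label tau u v x) v)%R].
Proof.
move=> Hg euv xa oD lab sD su.
have nuv : u != v by apply/eqP => E; move: euv; rewrite E (proj2 Hg).
have Duv := rem_edge_no_arc oD.
have sE := s_lab_add_arc tau x _ Duv.
split; [exact: orientation_add_arc | exact: labelling_add_arc | |].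
- move=> w; rewrite sE; have := sD w.
  case: (eqVneq w u) => [->|_]; first by rewrite (negbTE nuv); lia.
  by case: (w == v); lia.
- by rewrite sE eqxx eq_sym (negbTE nuv) subr0; have := sD v; lia.
Qed.

Lemma rooted_labelling (T : finType) (a : seq nat) :
  forall (e : rel T) (r : T),
  simple_graph e -> #|edges e| = size a -> sorted ltn a ->
  exists (D : rel T) (tau : T * T -> nat),
    [/\ orientation e D, labelling D tau a,
        (forall w, (- (last 0%N a)%:Z <= s_lab D tau w)%R) &
        (0 <= s_lab D tau r)%R].
Proof.
elim/last_ind: a => [|a x IH] e r Hg He Hs.
  have [oD lab s0] := edgeless_labelling (cards0_eq He).
  by exists (fun _ _ => false), (fun _ => 0%N); split=> // [w|]; rewrite s0.
have xa : x \notin a.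
  by have := sorted_uniq ltn_trans ltnn Hs; rewrite rcons_uniq => /andP [].
have [sa lastx] : sorted ltn a /\ (last 0%N a <= x)%N.
  move: Hs; case: a {IH He xa} => [|y s] //=.
  by rewrite rcons_path => /andP [-> /ltnW].
have rooted_at_edge u v : e u v ->
  exists (D : rel T) (tau : T * T -> nat),
    [/\ orientation e D, labelling D tau (rcons a x),
        (forall w, (- (last 0%N (rcons a x))%:Z <= s_lab D tau w)%R) &
        (0 <= s_lab D tau v)%R].
  move=> euv.
  have He' : #|edges (rem_edge e u v)| = size a.
    by move: He; rewrite (card_edges_rem_edge euv) size_rcons => -[].
  have [D [tau [oD lab sD su]]] := IH _ u (simple_graph_rem_edge u v Hg) He' sa.
  have sDx w : (- x%:Z <= s_lab D tau w)%R.
    by apply: le_trans (sD w); rewrite lerN2 lez_nat.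
  have [oD' lab' sD' sv] := extend_by_edge Hg euv xa oD lab sDx su.
  exists (add_arc D u v), (add_label tau u v x); split; rewrite ?last_rcons //.
  by apply: labelling_eq_mem lab' => y; rewrite mem_rcons.
case: (pickP (fun w => e w r)) => [u eur|isolated]; first exact: rooted_at_edge u r eur.
have : (0 < #|edges e|)%N by rewrite He size_rcons.
case/card_gt0P => S /imsetP [[u v]]; rewrite inE => /= euv _.
have [D [tau [oD lab sD _]]] := rooted_at_edge u v euv.
exists D, tau; split => //.
by rewrite (s_lab_isolated tau (proj1 Hg) oD) // => w; rewrite isolated.
Qed.

(* a = [:: a_1; ...; a_m], strictly increasing positive integers, m = |E(G)| >= 1,
   a_m = last 0 a. tau is a bijection from A(D) onto {a_1,...,a_m}. *)
Theorem lemma2p1 (T : finType) (e : rel T) (a : seq nat) :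
  simple_graph e ->
  (1 <= #|edges e|)%N ->
  size a = #|edges e| ->
  sorted ltn a ->
  all (fun x => 0 < x)%N a ->
  exists (D : rel T) (tau : T * T -> nat),
    [/\ orientation e D,
        {in arcs D &, injective tau},
        (forall p, p \in arcs D -> tau p \in a),
        (forall x, x \in a -> exists2 p, p \in arcs D & tau p = x) &
        (forall v : T, (- (last 0%N a)%:Z <= s_lab D tau v)%R)].
Proof.
move=> Hg He Ha Hs _.
case/card_gt0P: He => S /imsetP [[r _] _ _].
have [D [tau [oD [inj into onto] sD _]]] := rooted_labelling r Hg (esym Ha) Hs.
by exists D, tau; split.
Qed.
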